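(* Let $\mathcal{W}$ be a finite set and $\Delta<0.5$. If $\mathbf{P}_1=(P_{1,w})_{w\in\mathcal{W}}$ and $\mathbf{P}_2=(P_{2,w})_{w\in\mathcal{W}}$ are probability vectors with $\max_wP_{1,w}\le1-\Delta$ and $\max_wP_{2,w}\le1-\Delta$, then $$\sum_{w\in\mathcal{W}}\sum_{j\in\mathcal{W}}(P_{1,w}\wedge P_{2,j})(1-P_{1,w})(1-P_{2,j})\ \ge\ \Delta(1-\Delta)^2+3\Delta^2(1-\Delta).$$
   Context: $a\wedge b=\min(a,b)$. *)

From mathcomp Require Import all_boot all_order all_algebra.
Set Implicit Arguments. Unset Strict Implicit. Unset Printing Implicit Defensive.
Import Order.TTheory GRing.Theory Num.Theory.
Local Open Scope ring_scope.

Definition prob_vec (R : realFieldType) (W : finType) (P : W -> R) : Prop :=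
  (forall w, 0 <= P w) /\ \sum_(w : W) P w = 1.

From mathcomp Require Import all_boot all_order all_algebra.
From mathcomp Require Import ring lra.
Set Implicit Arguments.
Unset Strict Implicit.
Unset Printing Implicit Defensive.

Import Order.TTheory GRing.Theory Num.Theory.
Local Open Scope ring_scope.

(* For [b >= 0] the function [g_b p := (1 - p) * min p b] is concave on [0, 1],
   being the minimum of a parabola and a line.  Hence it lies above the broken
   line through [0], [D] and [1 - D], whose sum over a probability vector [P]
   only involves [\sum_w min (P w) D], which is at least [2 D] when all entries
   are at most [1 - D].  So [\sum_w g_b (P w) >= g_b D + g_b (1 - D)], the value
   at the extremal vector [(1 - D, D, 0, ...)].  Applying this in [w] with
   [b = P2 j], then in [j] with [b = D] and [b = 1 - D], gives the bound. *)

Definition concave_on (R : realFieldType) (a c : R) (f : R -> R) : Prop :=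
  forall x y z, a <= x -> x <= y -> y <= z -> z <= c ->
    (z - y) * f x + (y - x) * f z <= (z - x) * f y.

Section Concavity.
Variable R : realFieldType.
Implicit Types (a b c p : R) (f g : R -> R).

Lemma concave_onS a c a' c' f :
  a <= a' -> c' <= c -> concave_on a c f -> concave_on a' c' f.
Proof.
move=> aa' c'c cf x y z ax xy yz zc; apply: cf => //.
  exact: le_trans ax.
exact: le_trans c'c.
Qed.

Lemma concave_on_min a c f g :
  concave_on a c f -> concave_on a c g ->
  concave_on a c (fun x => Num.min (f x) (g x)).
Proof.
move=> cf cg x y z ax xy yz zc.
have zy0 : 0 <= z - y by rewrite subr_ge0.
have yx0 : 0 <= y - x by rewrite subr_ge0.
rewrite [leRHS]minr_pMr ?subr_ge0 ?(le_trans xy) // le_min; apply/andP; split.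
- apply: le_trans (cf x y z ax xy yz zc).
  by apply: lerD; apply: ler_wpM2l; rewrite // ge_min lexx.
- apply: le_trans (cg x y z ax xy yz zc).
  by apply: lerD; apply: ler_wpM2l; rewrite // ge_min lexx ?orbT.
Qed.

Lemma concave_on_capped b : concave_on 0 1 (fun p => (1 - p) * Num.min p b).
Proof.
have parabola : concave_on 0 1 (fun p => (1 - p) * p).
  move=> x y z _ xy yz _.
  rewrite -subr_ge0 (_ : _ - _ = (z - x) * (z - y) * (y - x)); last by ring.
  by rewrite !mulr_ge0 ?subr_ge0 ?(le_trans xy).
have affine : concave_on 0 1 (fun p => (1 - p) * b).
  move=> x y z _ _ _ _.
  by rewrite -subr_ge0 (_ : _ - _ = 0); last ring.
have capE p : p <= 1 -> (1 - p) * Num.min p b = Num.min ((1 - p) * p) ((1 - p) * b).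
  by move=> p1; rewrite minr_pMr // subr_ge0.
move=> x y z x0 xy yz z1.
have y1 := le_trans yz z1; have x1 := le_trans xy y1.
by rewrite !capE //; apply: (concave_on_min parabola affine).
Qed.

End Concavity.

Lemma min_addr_le (R : realFieldType) (x y c : R) :
  0 <= x -> 0 <= y -> 0 <= c ->
  Num.min (x + y) c <= Num.min x c + Num.min y c.
Proof. by move=> *; case: (leP x c); case: (leP y c); case: (leP (x + y) c); lra. Qed.

Lemma min_sum_le (R : realFieldType) (I : Type) (r : seq I) (P : pred I)
    (F : I -> R) (c : R) :
  0 <= c -> (forall i, P i -> 0 <= F i) ->
  Num.min (\sum_(i <- r | P i) F i) c <= \sum_(i <- r | P i) Num.min (F i) c.
Proof.
move=> c0 F0.
pose K (s t : R) := (0 <= s) && (Num.min s c <= t).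
suff /andP[] : K (\sum_(i <- r | P i) F i) (\sum_(i <- r | P i) Num.min (F i) c) by [].
apply: (big_ind2 K).
- by rewrite /K ge_min !lexx.
- move=> x1 x2 y1 y2 /andP[x0 x12] /andP[y0 y12]; rewrite /K addr_ge0 //=.
  by apply: le_trans (min_addr_le _ _ _) (lerD x12 y12).
- by move=> i Pi; rewrite /K F0 // lexx.
Qed.

Lemma sum_min_prob_vec_ge (R : realFieldType) (W : finType) (P : W -> R) (D : R) :
  0 <= D -> D <= 1 / 2 -> prob_vec P -> (forall w, P w <= 1 - D) ->
  2 * D <= \sum_w Num.min (P w) D.
Proof.
move=> D0 D1 [P0 P1] Pmax.
have [/existsP[w0 Dw0] | /existsPn small] := boolP [exists w, D < P w]; last first.
  rewrite (eq_bigr P) ?P1; last by move=> w _; apply/min_idPl; rewrite leNgt small.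
  lra.
(* the other entries carry mass [1 - P w0 >= D] *)
have rest := @min_sum_le _ _ (index_enum W) (predC1 w0) P D D0 (fun w _ => P0 w).
rewrite (bigD1 w0) //=; move: P1; rewrite (bigD1 w0) //= => P1.
have := Pmax w0; move/ltW/min_idPr: Dw0 => ->.
by move: rest; case: (leP (\sum_(w | w != w0) P w) D); lra.
Qed.

Section ConcaveVertex.
Variables (R : realFieldType) (D : R) (g : R -> R).
Hypotheses (D_gt0 : 0 < D) (D_lt1_2 : D < 1 / 2).
Hypotheses (g_concave : concave_on 0 (1 - D) g) (g0_ge0 : 0 <= g 0).

Let D_le : D <= 1 - D. Proof. by move: D_lt1_2; lra. Qed.

Let gap_gt0 : 0 < 1 - 2 * D. Proof. by move: D_lt1_2; lra. Qed.

(* [D (1 - 2 D)] times the broken line through [(0, 0)], [(D, g D)] and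
   [(1 - D, g (1 - D))]. *)
Lemma concave_ge_interp a : 0 <= a -> a <= 1 - D ->
  D * (g (1 - D) - g D) * a + ((1 - D) * g D - D * g (1 - D)) * Num.min a D
    <= D * (1 - 2 * D) * g a.
Proof.
move=> a0 a1; case: (leP a D) => [aD | Da].
- have := g_concave (lexx 0) a0 aD D_le.
  have : 0 <= (D - a) * g 0 by rewrite mulr_ge0 // subr_ge0.
  move: gap_gt0; nra.
- have := g_concave (ltW D_gt0) (ltW Da) a1 (lexx _).
  move: D_gt0; nra.
Qed.

Lemma interp_kink_ge0 : 0 <= (1 - D) * g D - D * g (1 - D).
Proof.
have := g_concave (lexx 0) (ltW D_gt0) D_le (lexx _).
have : 0 <= (1 - D - D) * g 0 by rewrite mulr_ge0 // subr_ge0.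
lra.
Qed.

Lemma concave_sum_prob_vec_ge (W : finType) (P : W -> R) :
  prob_vec P -> (forall w, P w <= 1 - D) ->
  g D + g (1 - D) <= \sum_w g (P w).
Proof.
move=> Pprob Pmax; have [P0 P1] := Pprob.
set al := D * (g (1 - D) - g D); set be := (1 - D) * g D - D * g (1 - D).
have interp : al * \sum_w P w + be * \sum_w Num.min (P w) D
    <= D * (1 - 2 * D) * \sum_w g (P w).
  rewrite !mulr_sumr -big_split /=; apply: ler_sum => w _.
  exact: concave_ge_interp.
have capped := sum_min_prob_vec_ge (ltW D_gt0) (ltW D_lt1_2) Pprob Pmax.
rewrite -(ler_pM2l (mulr_gt0 D_gt0 gap_gt0)); apply: le_trans interp.
rewrite P1 mulr1 (_ : _ * (g D + g (1 - D)) = al + be * (2 * D)).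
  by rewrite lerD2l; exact: ler_wpM2l interp_kink_ge0 _ _ capped.
by rewrite /al /be; ring.
Qed.

End ConcaveVertex.

Lemma capped_sum_prob_vec_ge (R : realFieldType) (W : finType) (P : W -> R) (D b : R) :
  0 < D -> D < 1 / 2 -> 0 <= b -> prob_vec P -> (forall w, P w <= 1 - D) ->
  (1 - D) * Num.min D b + D * Num.min (1 - D) b <= \sum_w (1 - P w) * Num.min (P w) b.
Proof.
move=> D0 D1 b0 Pprob Pmax.
have g_concave : concave_on 0 (1 - D) (fun p => (1 - p) * Num.min p b).
  by apply: concave_onS (concave_on_capped b) => //; rewrite gerBl ltW.
have g0_ge0 : 0 <= (1 - 0) * Num.min 0 b by rewrite subr0 mul1r le_min lexx.
by have := concave_sum_prob_vec_ge D0 D1 g_concave g0_ge0 Pprob Pmax; rewrite /= subKr.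
Qed.

Theorem lemmaA7 (R : realFieldType) (W : finType) (Delta : R)
  (P1 P2 : W -> R) :
  0 <= Delta -> Delta < 1 / 2 ->
  prob_vec P1 -> prob_vec P2 ->
  (forall w : W, P1 w <= 1 - Delta) ->
  (forall w : W, P2 w <= 1 - Delta) ->
  \sum_(w : W) \sum_(j : W)
     (Num.min (P1 w) (P2 j) * (1 - P1 w) * (1 - P2 j))
  >= Delta * (1 - Delta) ^+ 2 + 3 * Delta ^+ 2 * (1 - Delta).
Proof.
move=> D0 D1 hP1 hP2 M1 M2.
have [[P1_ge0 _] [P2_ge0 _]] := (hP1, hP2).
have sub_ge0 (x : R) : x <= 1 - Delta -> 0 <= 1 - x.
  by move=> /le_trans; rewrite subr_ge0; apply; rewrite gerBl.
move: D0; rewrite le_eqVlt => /predU1P[D_eq0 | D0].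
  rewrite -D_eq0 [leLHS](_ : _ = 0); last by ring.
  apply: sumr_ge0 => w _; apply: sumr_ge0 => j _.
  by rewrite !mulr_ge0 ?le_min ?P1_ge0 ?P2_ge0 ?sub_ge0 // ?D_eq0.
rewrite exchange_big /=.
have inner j : (1 - P2 j) * ((1 - Delta) * Num.min (P2 j) Delta
                             + Delta * Num.min (P2 j) (1 - Delta))
    <= \sum_w Num.min (P1 w) (P2 j) * (1 - P1 w) * (1 - P2 j).
  rewrite (eq_bigr (fun w => (1 - P2 j) * ((1 - P1 w) * Num.min (P1 w) (P2 j))));
    last by move=> w _; ring.
  rewrite -mulr_sumr ler_wpM2l ?sub_ge0 // minC [Num.min (P2 j) _]minC.
  exact: capped_sum_prob_vec_ge.
apply: le_trans (ler_sum _ (fun j _ => inner j)).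
under eq_bigr => j _ do rewrite mulrDr mulrCA (mulrCA (1 - P2 j) Delta).
rewrite big_split -!mulr_sumr /=.
have D_le : Delta <= 1 - Delta by move: D1; lra.
have S1 := capped_sum_prob_vec_ge D0 D1 (ltW D0) hP2 M2.
have S2 := capped_sum_prob_vec_ge D0 D1 (le_trans (ltW D0) D_le) hP2 M2.
rewrite minxx (min_idPr D_le) in S1; rewrite minxx (min_idPl D_le) in S2.
move: D0 D_le S1 S2; nra.
Qed.
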